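(* Let $b>a\ge0$ and let $w$ be a palindrome (a word equal to its reverse). Then $$[S(w)]_{21}=[M(w)]_{22}-1\qquad\text{and}\qquad [S(w)]_{22}=[M(w)]_{12}+[S(w)]_{21}.$$ Furthermore, for every $k\in\mathbb{Z}_+$, $$\Big[S(10w)\,M\big(w(10w)^k\big)-S(01w)\,M\big(w(01w)^k\big)\Big]_{22}=0 .$$
   Context: Words are finite strings over $\{0,1\}$, $\epsilon$ the empty word, $w_k$ the $k$-th letter, $w_{1:k}=w_1\cdots w_k$, $|w|$ the length, $w^k$ the $k$-fold repetition ($w^0=\epsilon$), $\mathbb{Z}_+=\{0,1,2,\dots\}$. Define $F=\begin{pmatrix}1&1\\ a&1+a\end{pmatrix}$, $G=\begin{pmatrix}1&1\\ b&1+b\end{pmatrix}$, and for a word $w$, $M(w):=M(w_{|w|})\cdots M(w_1)$ with $M(\epsilon)=I$, $M(0)=F$, $M(1)=G$. The prefix sum is $S(w):=\sum_{k=1}^{|w|}M(w_{1:k})$, with $S(\epsilon)=0$ (the zero matrix). $[A]_{ij}$ denotes the $(i,j)$ entry. *)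

(* Words over {0,1} are seq bool: false = letter 0, true = letter 1. *)
From HB Require Import structures.
From mathcomp Require Import all_boot all_order all_algebra.
Set Implicit Arguments. Unset Strict Implicit. Unset Printing Implicit Defensive.
Import Order.TTheory GRing.Theory Num.Theory.
Local Open Scope ring_scope.

Section Defs.
Variable R : nzRingType.

Definition Mc (c : R) : 'M[R]_2 :=
  \matrix_(i < 2, j < 2)
    (if i == 0 :> nat then 1 else if j == 0 :> nat then c else 1 + c).

Definition Mlet (a b : R) (x : bool) : 'M[R]_2 := if x then Mc b else Mc a.

(* M(w) = M(w_|w|) ... M(w_1), M(eps) = I *)
Definition Mw (a b : R) (w : seq bool) : 'M[R]_2 :=
  foldl (fun acc x => Mlet a b x *m acc) 1%:M w.

Definition Sw (a b : R) (w : seq bool) : 'M[R]_2 :=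
  \sum_(k < size w) Mw a b (take k.+1 w).

Definition wpow (w : seq bool) (k : nat) : seq bool := flatten (nseq k w).
End Defs.

(* Every letter matrix M_c satisfies Q M_c = M_c^T Q for Q = [[0,1],[1,1]], so
   Q M(rev v) = M(v)^T Q for every word v.  Reading off entries of this identity
   for a palindrome gives M_22 = M_11 + M_21, and reading off the (2,2) entry
   shows that [1 1] M(v) e_2 = [1 1] M(rev v) e_2.  The second row of S(w) is
   [1 1] M(w) - [1 1], hence [S(x) M(y)]_22 = [1 1] (M(y x) - M(y)) e_2; for
   x = 10w, y = w(10w)^k the words y x = w(10w)^(k+1) and y are reversed to the
   corresponding words for 01w, which gives the last identity. *)
From HB Require Import structures.
From mathcomp Require Import all_boot all_order all_algebra.
From mathcomp Require Import ring.
Import GRing.Theory.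
Local Open Scope ring_scope.

Lemma cat_wpow_rotate (s t : seq bool) k :
  wpow (s ++ t) k ++ s = s ++ wpow (t ++ s) k.
Proof.
rewrite /wpow; elim: k => [|k IHk] /=; first by rewrite cats0.
by rewrite -!catA IHk.
Qed.

Lemma wpowSr (s : seq bool) k : wpow s k.+1 = wpow s k ++ s.
Proof. by rewrite /wpow -addn1 nseqD flatten_cat /= cats0. Qed.

Lemma rev_wpow (s : seq bool) k : rev (wpow s k) = wpow (rev s) k.
Proof. by rewrite /wpow rev_flatten map_nseq rev_nseq. Qed.

Lemma big_ord2 (V : nmodType) (f : 'I_2 -> V) : \sum_(i < 2) f i = f 0 + f 1.
Proof.
by rewrite !big_ord_recl big_ord0 addr0; congr (_ + f _); apply/val_inj.
Qed.

Section LetterMatrices.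
Variables (R : comNzRingType) (a b : R).

Lemma Mw_foldl w (acc : 'M[R]_2) :
  foldl (fun acc x => Mlet a b x *m acc) acc w = Mw a b w *m acc.
Proof.
elim: w acc => [|x w IHw] acc /=; first by rewrite /Mw /= mul1mx.
by rewrite /Mw /= IHw [in RHS]IHw mulmx1 mulmxA.
Qed.

Lemma Mw_cat u v : Mw a b (u ++ v) = Mw a b v *m Mw a b u.
Proof. by rewrite {1}/Mw foldl_cat Mw_foldl. Qed.

Lemma Mw_rcons s x : Mw a b (rcons s x) = Mlet a b x *m Mw a b s.
Proof. by rewrite -cats1 Mw_cat /Mw /= mulmx1. Qed.

Lemma Mw_cons x s : Mw a b (x :: s) = Mw a b s *m Mlet a b x.
Proof. by rewrite -cat1s Mw_cat /Mw /= mulmx1. Qed.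

Lemma Sw_rcons s x : Sw a b (rcons s x) = Sw a b s + Mw a b (rcons s x).
Proof.
rewrite /Sw size_rcons big_ord_recr /=; congr (_ + _).
  by apply: eq_bigr => i _; rewrite -cats1 takel_cat.
by rewrite take_oversize // size_rcons.
Qed.

(* The second row of S(w) is [1 1] M(w) - [1 1]: the first row of each letter
   matrix is [1 1], and [1 1] M_c = [1 1] + (second row of M_c). *)
Lemma Sw_row1 w (j : 'I_2) : Sw a b w 1 j = Mw a b w 0 j + Mw a b w 1 j - 1.
Proof.
elim/last_ind: w => [|s x IHs].
  rewrite /Sw big_ord0 !mxE.
  by case: j => [[|[|j]] ?] //=; rewrite ?addr0 ?add0r subrr.
rewrite Sw_rcons Mw_rcons !mxE IHs !big_ord2.
by case: x; rewrite !mxE /=; ring.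
Qed.

Definition Qm : 'M[R]_2 :=
  \matrix_(i < 2, j < 2) (if (i == 0 :> nat) && (j == 0 :> nat) then 0 else 1).

Lemma Qm_Mlet x : Qm *m Mlet a b x = (Mlet a b x)^T *m Qm.
Proof.
by apply/matrixP=> i j; case: x; rewrite !mxE !big_ord2 !mxE;
  case: i j => [[|[|i]] ?] [[|[|j]] ?] //=; ring.
Qed.

Lemma Qm_Mw_rev v : Qm *m Mw a b (rev v) = (Mw a b v)^T *m Qm.
Proof.
elim: v => [|x v IHv]; first by rewrite trmx1 mulmx1 mul1mx.
by rewrite rev_cons Mw_rcons Mw_cons trmx_mul mulmxA Qm_Mlet -!mulmxA IHv.
Qed.

Definition col1_sum (X : 'M[R]_2) : R := X 0 1 + X 1 1.

Lemma col1_sum_Mw_rev v : col1_sum (Mw a b (rev v)) = col1_sum (Mw a b v).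
Proof.
have := congr1 (fun X : 'M[R]_2 => X 1 1) (Qm_Mw_rev v).
by rewrite /col1_sum !mxE !big_ord2 !mxE /= !mul1r !mulr1.
Qed.

Lemma Mw_palindrome w : rev w = w -> Mw a b w 1 1 = Mw a b w 0 0 + Mw a b w 1 0.
Proof.
move=> w_pal; have := congr1 (fun X : 'M[R]_2 => X 0 1) (Qm_Mw_rev w).
by rewrite w_pal !mxE !big_ord2 !mxE /= mul0r mul1r add0r !mulr1.
Qed.

Lemma Sw_mulmx11 u (X : 'M[R]_2) :
  (Sw a b u *m X) 1 1 = col1_sum (Mw a b u *m X) - col1_sum X.
Proof. by rewrite /col1_sum !mxE !big_ord2 !Sw_row1; ring. Qed.

End LetterMatrices.

Theorem proposition5 (R : realFieldType) (a b : R) (w : seq bool) :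
  0 <= a -> a < b -> rev w = w ->
  [/\ Sw a b w 1 0 = Mw a b w 1 1 - 1,
      Sw a b w 1 1 = Mw a b w 0 1 + Sw a b w 1 0 &
      forall k : nat,
        (Sw a b ([:: true; false] ++ w)
           *m Mw a b (w ++ wpow ([:: true; false] ++ w) k)
         - Sw a b ([:: false; true] ++ w)
           *m Mw a b (w ++ wpow ([:: false; true] ++ w) k)) 1 1 = 0].
Proof.
move=> _ _ w_pal.
have S10 : Sw a b w 1 0 = Mw a b w 1 1 - 1 by rewrite Sw_row1 Mw_palindrome.
split=> [//||k]; first by rewrite S10 Sw_row1; ring.
have rev_w_10w_pow j : rev (w ++ wpow ([:: true; false] ++ w) j)
                   = w ++ wpow ([:: false; true] ++ w) j.
  by rewrite rev_cat rev_wpow rev_cat w_pal cat_wpow_rotate.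
have entry11B (X Y : 'M[R]_2) : (X - Y) 1 1 = X 1 1 - Y 1 1 by rewrite !mxE.
rewrite entry11B !Sw_mulmx11 -!Mw_cat -!catA -!wpowSr.
by rewrite -!rev_w_10w_pow !col1_sum_Mw_rev subrr.
Qed.
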